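(* Let $\tilde S\subseteq\mathfrak P$ and $a,b\in\mathcal C_{\mathfrak P}(\tilde S)$ with $\omega_{\tilde S}(a)<\omega_{\tilde S}(b)$. Then $\omega_{\tilde S}(a\cdot b)=\omega_{\tilde S}(a)$.
   Context: $\mathfrak P$ is the group of $N$-qubit Pauli operators modulo phases; $\mathcal C_{\mathfrak P}(\tilde S)$ is the centralizer of $\tilde S$ in $\mathfrak P$. The weight of a Pauli operator is its number of non-identity tensor factors. For $l\in\mathcal C_{\mathfrak P}(\tilde S)$, $\omega_{\tilde S}(l)$ is the minimum weight of an operator $e\in\mathcal C_{\mathfrak P}(\tilde S)$ that anticommutes with $l$, with value $+\infty$ if no such $e$ exists. *)

From mathcomp Require Import all_boot all_order.
Set Implicit Arguments. Unset Strict Implicit. Unset Printing Implicit Defensive.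

(* A single-qubit Pauli operator modulo phase is encoded by its (x, z) bits:
   (false,false) = I, (true,false) = X, (false,true) = Z, (true,true) = Y. *)
Definition pauli (N : nat) := {ffun 'I_N -> bool * bool}.

Definition pmul N (p q : pauli N) : pauli N :=
  [ffun i => (xorb (p i).1 (q i).1, xorb (p i).2 (q i).2)].

Definition weight N (p : pauli N) : nat := #|[set i | p i != (false, false)]|.

Definition anticomm1 (u v : bool * bool) : bool := xorb (u.1 && v.2) (u.2 && v.1).

Definition anticomm N (p q : pauli N) : bool :=
  odd #|[set i | anticomm1 (p i) (q i)]|.

Definition centralizer N (S : {set pauli N}) : {set pauli N} :=
  [set p | [forall s in S, ~~ anticomm p s]].

(* omega_S(l): minimum weight of e in the centralizer of S anticommuting with l;
   None encodes +infinity. *)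
Definition omega N (S : {set pauli N}) (l : pauli N) : option nat :=
  if [pick e | (e \in centralizer S) && anticomm e l] is Some e0 then
    Some (weight [arg min_(e < e0 | (e \in centralizer S) && anticomm e l) weight e])
  else None.

Definition olt (m n : option nat) : bool :=
  match m, n with
  | Some a, Some b => a < b
  | Some _, None => true
  | None, _ => false
  end.

(* The lightest centralizer element [e] anticommuting with [a] is lighter than
   anything anticommuting with [b], so it commutes with [b] and hence
   anticommutes with [a b].  Conversely, anticommutation is additive in the
   second argument, so anything anticommuting with [a b] anticommutes with [a]
   (weight at least omega a) or with [b] (weight even larger). *)
From mathcomp Require Import all_boot all_order.
Set Implicit Arguments. Unset Strict Implicit. Unset Printing Implicit Defensive.

Lemma odd_card_set (T : finType) (f : pred T) :
  odd #|[set i | f i]| = \big[addb/false]_i f i.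
Proof.
rewrite -sum1dep_card big_mkcond /=.
rewrite (big_morph odd oddD (erefl : odd 0 = false)).
by apply: eq_bigr => i _; case: (f i).
Qed.

Lemma anticommMr N (e a b : pauli N) :
  anticomm e (pmul a b) = anticomm e a (+) anticomm e b.
Proof.
rewrite /anticomm !odd_card_set -big_split /=.
apply: eq_bigr => i _; rewrite /pmul ffunE /anticomm1 /=.
by case: (e i) (a i) (b i) => [[] []] [[] []] [[] []].
Qed.

Section Omega.
Variables (N : nat) (S : {set pauli N}).
Implicit Types (l e : pauli N) (w : nat).

Definition detects l e : bool :=
  (e \in centralizer S) && anticomm e l.

Lemma omega_SomeP l w : omega S l = Some w ->
  (exists2 e, detects l e & weight e = w) /\
  (forall e, detects l e -> w <= weight e).
Proof.
rewrite /omega; case: pickP => [e0 De0|] //= [<-].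
by case: arg_minnP => // e De minE; split; [exists e | exact: minE].
Qed.

Lemma omega_None l : omega S l = None -> forall e, ~~ detects l e.
Proof. by rewrite /omega; case: pickP => [//|noE] _ e; rewrite /detects noE. Qed.

Lemma omega_lt_weight w l : olt (Some w) (omega S l) ->
  forall e, detects l e -> w < weight e.
Proof.
case Ol: (omega S l) => [wl|] /= lt_w e De.
  by have [_ minE] := omega_SomeP Ol; apply: leq_trans lt_w (minE e De).
by move: De; rewrite (negbTE (omega_None Ol e)).
Qed.

Lemma omega_weight_min l e0 : detects l e0 ->
  (forall e, detects l e -> weight e0 <= weight e) ->
  omega S l = Some (weight e0).
Proof.
move=> De0 min_e0; rewrite /omega; case: pickP => [e1 De1|noE]; last first.
  by move: De0; rewrite /detects noE.
congr Some; case: arg_minnP => // e De minE.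
by apply/eqP; rewrite eqn_leq minE // min_e0.
Qed.

End Omega.

Theorem lemma3 (N : nat) (S : {set pauli N}) (a b : pauli N) :
  a \in centralizer S -> b \in centralizer S ->
  olt (omega S a) (omega S b) ->
  omega S (pmul a b) = omega S a.
Proof.
move=> _ _; case Oa: (omega S a) => [wa|] // lt_ab.
have [[ea /andP [Cea Aea] Wea] min_a] := omega_SomeP Oa; subst wa.
have heavy_b := omega_lt_weight lt_ab.
have Bea : anticomm ea b = false.
  apply/negbTE/negP => Ab.
  by have := heavy_b ea; rewrite /detects Cea Ab ltnn => /(_ isT).
apply: omega_weight_min; first by rewrite /detects Cea anticommMr Aea Bea.
move=> e /andP [Ce]; rewrite anticommMr.
case Ae: (anticomm e a) => /=; [move=> _ | move=> Be].
  by apply: min_a; rewrite /detects Ce Ae.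
by apply/ltnW/heavy_b; rewrite /detects Ce Be.
Qed.
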